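(* Let $G_1,\dots,G_n$ be torus grids, let $\Gamma=\{(f_{i,1},f_{i,2},\pi_i)\}_{i=1}^{n-1}$ be a gluing set for them, and let $G$ be the resulting composite grid. Let $T$ be a smooth transition system on $G$. Then there exists a set $\mathbb{T}=\{T_1,\dots,T_n\}$, with $T_i$ a smooth transition system of $G_i$, compatible with $\Gamma$, such that $T=\#\mathbb{T}$.
   Context: A torus grid is a $(k,l)$-regular grid on the torus: an $l$-regular graph ($l$ even) cellularly embedded on the torus whose geometric dual is $k$-regular. A face is cyclic if its boundary walk is a cycle. A gluing set for $G_1,\dots,G_n$ is a collection $\{(f_{i,1},f_{i,2},\pi_i)\}_{i=1}^{n-1}$ where $f_{i,1}$ is a cyclic face of $G_i$, $f_{i,2}$ is a cyclic face of $G_{i+1}$, $f_{i,2}\cap f_{i+1,1}=\emptyset$, and $\pi_i:\partial f_{i,1}\to\partial f_{i,2}$ is an isomorphism of cycle graphs. The composite grid $G$ is obtained by removing the interior of each face $f_{i,j}$ and gluing $\partial f_{i,1}$ to $\partial f_{i,2}$ according to $\pi_i$; it is embedded on the genus-$n$ surface. A transition at a vertex is a partition of its half-edges into pairs; it is smooth if it only pairs half-edges adjacent in the cyclic rotation; a smooth transition system is a choice of smooth transition at each vertex. For a vertex $v$ on a face $f$, a transition at $v$ is an $f$-transition if it pairs the two half-edges of $\partial f$ at $v$ with each other. Smooth transition systems $T_i$ of $G_i$ and $T_{i+1}$ of $G_{i+1}$ are compatible via $(f_{i,1},f_{i,2},\pi_i)$ if for every $v\in\partial f_{i,1}$, $T_i$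 is an $f_{i,1}$-transition at $v$ if and only if $T_{i+1}$ is not an $f_{i,2}$-transition at $\pi_i(v)$; $\mathbb{T}$ is compatible with $\Gamma$ if this holds for each $1\le i<n$. For compatible transitions $t_1$ at $v_1\in\partial f_{i,1}$ and $t_2$ at $v_2=\pi_i(v_1)$, with $v$ the glued vertex of $G$, the connected sum $t_1\# t_2$ at $v$ is defined as follows: every pair of $t_1$ or $t_2$ containing no half-edge of the glued face boundary stays a pair; exactly one of $t_1,t_2$ pairs the two boundary half-edges $h,h'$ (of its face) at its vertex with non-boundary half-edges $s,s'$ respectively, and in $t_1\#t_2$ one pairs $s$ and $s'$ with the half-edges of the glued cycle whose preimages are $h$ and $h'$ respectively. The connected sum $\#\mathbb{T}$ of a set $\mathbb{T}$ compatible with $\Gamma$ is the smooth transition system of $G$ which at each unglued vertex uses the transition of the corresponding $T_i$, and at each vertex formed by gluing $f_{i,1}$ to $f_{i,2}$ uses the connected sum of the transitions of $T_i$ and $T_{i+1}$ at its preimages. *)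

From mathcomp Require Import all_boot.
Set Implicit Arguments. Unset Strict Implicit. Unset Printing Implicit Defensive.

(* Cellularly embedded graphs as combinatorial maps (rotation systems).     *)
(* Darts = half-edges.  [edge] pairs the two half-edges of an edge,         *)
(* [rot] is the cyclic rotation of half-edges around their vertex.          *)
(* Vertices = [rot]-orbits, edges = [edge]-orbits, faces = orbits of the    *)
(* face permutation [rot \o edge].                                          *)
(* The n torus grids G_1..G_n are encoded as ONE map on a finite dart type  *)
(* D (their disjoint union), together with a labelling comp : D -> 'I_n     *)
(* (comp x = i means x is a half-edge of G_(i+1)); [edge] and [rot]         *)
(* preserve comp, and each fibre of comp must be a torus grid.              *)

Section Maps.
Variable D : finType.
Variables (edge rot : D -> D).

Definition face_perm (x : D) : D := rot (edge x).

Definition is_map : Prop :=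
  [/\ involutive edge, (forall x, edge x != x) & injective rot].

Definition samev (x y : D) : bool := fconnect rot x y.

Definition rot_adj (x y : D) : bool := (y == rot x) || (x == rot y).

Definition is_face (f : {set D}) : Prop :=
  exists d, f = [set x | fconnect face_perm d x].

(* cyclic face: the boundary walk visits pairwise distinct vertices and
   pairwise distinct edges, i.e. it is a cycle *)
Definition cyclic_face (f : {set D}) : Prop :=
  is_face f /\
  {in f &, forall x y, x != y -> ~~ samev x y && (y != edge x)}.

Definition bdry (f : {set D}) : {set D} := f :|: [set edge x | x in f].

Definition corner_of (f : {set D}) (x y : D) : bool :=
  (y == rot x) && (y \in f).

(* the sub-map on the darts of P is a (k,l)-regular grid on the torus:
   nonempty, connected, Euler characteristic V - E + F = 0 (orientable
   genus 1), every vertex of degree l (l even), every face of degree k *)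
Definition torus_grid_on (P : {pred D}) : Prop :=
  [/\ (exists x, x \in P),
      {in P &, forall x y,
          connect (fun a b => (b == edge a) || (b == rot a)) x y},
      ((fcard rot P + fcard face_perm P).*2 = #|P|)%N &
      exists k l : nat, ~~ odd l /\
        {in P, forall x, order rot x = l /\ order face_perm x = k}].

Definition torus_grid_family (n : nat) (comp : D -> 'I_n) : Prop :=
  [/\ is_map,
      (forall x, comp (edge x) = comp x /\ comp (rot x) = comp x) &
      forall i : 'I_n, torus_grid_on [pred x | comp x == i]].

(* Gluing set: for i < n-1, f1 i = f_{i+1,1} (a face of G_{i+1}, i.e. of    *)
(* comp-label i), f2 i = f_{i+1,2} (a face of comp-label i+1), and pi i the  *)
(* cycle isomorphism, acting on the half-edges of the boundary cycles.      *)
Variables (n : nat) (f1 f2 : nat -> {set D}) (pi : nat -> D -> D).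

Definition gluing_set (comp : D -> 'I_n) : Prop :=
  forall i, i.+1 < n ->
  [/\ cyclic_face (f1 i) /\ cyclic_face (f2 i),
      {in f1 i, forall x, comp x = i :> nat} /\
      {in f2 i, forall x, comp x = i.+1 :> nat},
      (i.+2 < n -> forall x y, x \in f2 i -> y \in f1 i.+1 -> ~~ samev x y),
      {in bdry (f1 i) &, injective (pi i)} /\
        pi i @: bdry (f1 i) = bdry (f2 i) &
      {in bdry (f1 i) &, forall x y, samev x y = samev (pi i x) (pi i y)} /\
      {in bdry (f1 i), forall x, pi i (edge x) = edge (pi i x)}].

(* The composite grid G.  Its half-edges are represented by the darts of D  *)
(* that are not boundary half-edges of some f2 i ([kept]); a boundary       *)
(* half-edge x of f1 i stands for the glued half-edge, whose two preimages   *)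
(* are x and pi i x.  [isrep x a] : a is a preimage of the half-edge x of G. *)
Definition gidx : seq nat := iota 0 n.-1.

Definition kept (x : D) : bool := ~~ has (fun i => x \in bdry (f2 i)) gidx.

Definition isrep (x a : D) : bool :=
  (a == x) || has (fun i => (x \in bdry (f1 i)) && (a == pi i x)) gidx.

Definition gbound (a : D) : bool :=
  has (fun i => (a \in bdry (f1 i)) || (a \in bdry (f2 i))) gidx.

Definition gcorner (a b : D) : bool :=
  has (fun i => [|| corner_of (f1 i) a b, corner_of (f1 i) b a,
                    corner_of (f2 i) a b | corner_of (f2 i) b a]) gidx.

(* rotation adjacency in the composite grid G: adjacency in some G_i, after
   identifying glued half-edges, except across the corners of removed faces.
   (At a glued vertex this is the cyclic order H, s_1..s_a, H', t_1..t_b.) *)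
Definition adjG (x y : D) : bool :=
  [exists a, exists b,
     [&& isrep x a, isrep y b, rot_adj a b & ~~ gcorner a b]].

(* T is a smooth transition system of G: a fixed-point-free pairing of the
   half-edges of G (T is only relevant on kept darts) pairing only
   half-edges adjacent in the rotation of G *)
Definition smooth_TS_G (T : D -> D) : Prop :=
  {in kept, forall x, [/\ kept (T x), T (T x) = x, T x != x & adjG x (T x)]}.

(* t is a smooth transition system of every G_i simultaneously *)
Definition smooth_TS (t : D -> D) : Prop :=
  forall x, [/\ t (t x) = x, t x != x & rot_adj x (t x)].

Definition ftrans (t : D -> D) (f : {set D}) (d : D) : bool :=
  [exists x, exists y,
     [&& x \in bdry f, y \in bdry f, x != y, samev x d, samev y d
       & t x == y]].

Definition compatible (t : D -> D) : Prop :=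
  forall i, i.+1 < n ->
    {in bdry (f1 i), forall d, ftrans t (f1 i) d = ~~ ftrans t (f2 i) (pi i d)}.

(* pairs of the connected sum #T: a pair {a, b} of some T_i, with the glued
   boundary half-edges replaced by the glued half-edge of G, except the pair
   of an f-transition (both half-edges on the glued boundary), which is
   dropped *)
Definition connsum_pair (t : D -> D) (x y : D) : bool :=
  [exists a, exists b,
     [&& isrep x a, isrep y b, t a == b & ~~ (gbound a && gbound b)]].

Definition is_connsum (T t : D -> D) : Prop :=
  {in kept &, forall x y, (T x == y) = connsum_pair t x y}.

End Maps.

From Pilot Require Import Defs.
From mathcomp Require Import all_boot.
Set Implicit Arguments. Unset Strict Implicit. Unset Printing Implicit Defensive.

(* Each pair {x, T x} of T lifts to a unique pair of half-edges at one vertex of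
   the disjoint union of the G_i: a glued half-edge of G has two preimages, but
   two glued half-edges are adjacent only across a corner of a removed face,
   which is not a rotation adjacency of G.  Let t be the lifted pair where there
   is one, and otherwise the pair of the two boundary half-edges of the removed
   face at that vertex.  The unlifted half-edges at a vertex are among these two,
   and since the degree is even they are both or none, so t is a smooth
   transition system.  The pair of T at a glued half-edge lifts to exactly one of
   its two preimages, so t is an f-transition at exactly one of them; and the
   connected sum of t gives back T by construction. *)


Lemma even_card_fixfree_involution (aT : finType) (phi : aT -> aT) (X : {set aT}) :
  {in X, forall z, [/\ phi z \in X, phi (phi z) = z & phi z != z]} -> ~~ odd #|X|.
Proof.
elim: {X}_.+1 {-2}X (ltnSn #|X|) => // k IH X leXk invX.
have [-> | [z zX]] := set_0Vmem X; first by rewrite cards0.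
have [pzX ppz pzz] := invX z zX.
have cardX : #|X| = #|X :\ z :\ phi z|.+2.
  by rewrite (cardsD1 z) zX (cardsD1 (phi z)) !inE pzz pzX.
rewrite cardX /= negbK; apply: IH => [|w].
  by rewrite cardX !ltnS in leXk; apply: ltnW.
rewrite !inE => /and3P [wpz wz wX]; have [pwX ppw pww] := invX w wX.
split=> //; rewrite pwX andbT; apply/andP; split.
- by apply: contra wz => /eqP e; apply/eqP; rewrite -ppw e ppz.
- by apply: contra wpz => /eqP e; apply/eqP; rewrite -ppw e.
Qed.

Section Maps.
Variables (D : finType) (edge rot : D -> D).
Hypothesis map_er : is_map edge rot.

Local Notation samev := (Defs.samev rot).
Local Notation face_perm := (Defs.face_perm edge rot).
Local Notation cyclic_face := (Defs.cyclic_face edge rot).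
Local Notation bdry := (Defs.bdry edge).
Local Notation corner_of := (Defs.corner_of rot).
Local Notation rot_adj := (Defs.rot_adj rot).

Lemma edgeK : involutive edge. Proof. by case: map_er. Qed.
Lemma edge_neq x : edge x != x. Proof. by case: map_er. Qed.
Lemma rot_inj : injective rot. Proof. by case: map_er. Qed.

Lemma samev_sym x y : samev x y = samev y x.
Proof. exact: (fconnect_sym rot_inj). Qed.

Lemma samev_refl x : samev x x. Proof. exact: connect0. Qed.

Lemma samev_rot x : samev (rot x) x.
Proof. by rewrite samev_sym; apply: fconnect1. Qed.

Lemma rot_adj_samev x y : rot_adj x y -> samev x y.
Proof. by case/orP=> /eqP->; [rewrite samev_sym|]; apply: samev_rot. Qed.

Lemma face_perm_inj : injective face_perm.
Proof. by move=> x y /rot_inj /(can_inj edgeK). Qed.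

Lemma bdryP (F : {set D}) x :
  reflect (x \in F \/ exists2 z, z \in F & x = edge z) (x \in bdry F).
Proof.
rewrite /Defs.bdry inE; apply: (iffP orP) => -[xF | ]; try by left.
- by case/imsetP=> z zF ->; right; exists z.
- by case=> z zF ->; right; apply: imset_f.
Qed.

Section CyclicFace.
Variable F : {set D}.
Hypothesis cycF : cyclic_face F.

Lemma face_perm_in z : z \in F -> face_perm z \in F.
Proof.
by case: cycF => -[d eF] _; rewrite eF !inE => dz; apply: connect_trans dz (fconnect1 _ _).
Qed.

Lemma finv_face_perm_in z : z \in F -> finv face_perm z \in F.
Proof.
by case: cycF => -[d eF] _; rewrite eF !inE => dz; apply: connect_trans dz (fconnect_finv _ _).
Qed.

Lemma cyclic_face_samev x y : x \in F -> y \in F -> samev x y -> x = y.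
Proof.
case: cycF => _ uniqF xF yF; apply: contraTeq => nxy.
by case/andP: (uniqF x y xF yF nxy).
Qed.

Lemma edge_notin_face z : z \in F -> edge z \notin F.
Proof.
case: cycF => _ uniqF zF; apply/negP => ezF.
have nz : z != edge z by rewrite eq_sym edge_neq.
by case/andP: (uniqF z (edge z) zF ezF nz); rewrite eqxx.
Qed.

Lemma bdry_at_face_dart x y :
  x \in bdry F -> y \in F -> samev x y -> x = y \/ rot x = y.
Proof.
case/bdryP=> [xF | [z zF ->]] yF sxy; [left | right]; first exact: cyclic_face_samev.
exact: cyclic_face_samev (face_perm_in zF) yF (connect_trans (samev_rot _) sxy).
Qed.

Lemma bdry_face_dart x : x \in bdry F -> exists2 y, y \in F & samev x y.
Proof.
case/bdryP=> [xF | [z zF ->]]; first by exists x; last apply: samev_refl.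
by exists (face_perm z); [apply: face_perm_in | apply: fconnect1].
Qed.

Lemma bdry_corner x y : x \in bdry F -> y \in bdry F -> samev x y -> x != y ->
  corner_of F x y || corner_of F y x.
Proof.
move=> xF yF sxy nxy; have [w wF sxw] := bdry_face_dart xF.
have syw : samev y w by rewrite samev_sym in sxy; apply: connect_trans sxy sxw.
rewrite /Defs.corner_of.
have [exw | rxw] := bdry_at_face_dart xF wF sxw;
  have [eyw | ryw] := bdry_at_face_dart yF wF syw.
- by rewrite exw eyw eqxx in nxy.
- by rewrite exw ryw eqxx wF orbT.
- by rewrite eyw rxw eqxx wF.
- by rewrite -ryw in rxw; rewrite (rot_inj rxw) eqxx in nxy.
Qed.

Lemma bdry_samev_unique a b c : a \in bdry F -> b \in bdry F -> c \in bdry F ->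
  samev a b -> samev a c -> b != a -> c != a -> b = c.
Proof.
move=> aF bF cF sab sac /eqP nba /eqP nca; have [w wF saw] := bdry_face_dart aF.
have at_w x : x \in bdry F -> samev a x -> x = w \/ x = finv rot w.
  move=> xF sax; rewrite samev_sym in sax.
  case: (bdry_at_face_dart xF wF (connect_trans sax saw)) => [|<-]; first by left.
  by right; rewrite (finv_f rot_inj).
move: (at_w a aF (samev_refl a)) (at_w b bF sab) (at_w c cF sac).
intuition congruence.
Qed.

Lemma bdry_mate_exists x :
  x \in bdry F -> exists2 y, y \in bdry F & samev x y && (y != x).
Proof.
case/bdryP=> [xF | [z zF ->]].
- set y := finv face_perm x; have ryx : rot (edge y) = x := f_finv face_perm_inj x.
  exists (edge y); first by apply/bdryP; right; exists y => //; apply: finv_face_perm_in.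
  rewrite -{1}ryx samev_rot /=.
  by apply: contraNneq _ (edge_notin_face (finv_face_perm_in xF)) => ->.
- exists (face_perm z); first by apply/bdryP; left; apply: face_perm_in.
  apply/andP; split; first exact: fconnect1.
  by apply: contraNneq _ (edge_notin_face zF) => <-; apply: face_perm_in.
Qed.

End CyclicFace.

Section Gluing.
Variables (n : nat) (comp : D -> 'I_n) (f1 f2 : nat -> {set D}) (pi : nat -> D -> D).
Hypothesis comp_edge : forall x, comp (edge x) = comp x.
Hypothesis comp_rot : forall x, comp (rot x) = comp x.
Hypothesis glue : gluing_set edge rot f1 f2 pi comp.

Local Notation gidx := (Defs.gidx n).
Local Notation kept := (Defs.kept edge n f2).
Local Notation isrep := (Defs.isrep edge n f1 pi).
Local Notation gbound := (Defs.gbound edge n f1 f2).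
Local Notation gcorner := (Defs.gcorner rot n f1 f2).

Lemma samev_comp x y : samev x y -> comp x = comp y.
Proof.
move=> /iter_findex <-; elim: (findex _ _ _) => [|k IH] //=.
by rewrite comp_rot.
Qed.

Lemma mem_gidx i : (i \in gidx) = (i.+1 < n).
Proof. by rewrite mem_iota add0n ltn_predRL. Qed.

Lemma cyclic_f1 i : i \in gidx -> cyclic_face (f1 i).
Proof. by rewrite mem_gidx => /glue [[]]. Qed.

Lemma cyclic_f2 i : i \in gidx -> cyclic_face (f2 i).
Proof. by rewrite mem_gidx => /glue [[]]. Qed.

Lemma comp_bdry_f1 i x : i \in gidx -> x \in bdry (f1 i) -> comp x = i :> nat.
Proof.
rewrite mem_gidx => /glue [_ [compF _] _ _ _] /bdryP [/compF // | [z /compF <- ->]].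
by rewrite comp_edge.
Qed.

Lemma comp_bdry_f2 i x : i \in gidx -> x \in bdry (f2 i) -> comp x = i.+1 :> nat.
Proof.
rewrite mem_gidx => /glue [_ [_ compF] _ _ _] /bdryP [/compF // | [z /compF <- ->]].
by rewrite comp_edge.
Qed.

Lemma bdry_f1_index i j x y : i \in gidx -> j \in gidx ->
  x \in bdry (f1 i) -> y \in bdry (f1 j) -> comp x = comp y -> i = j.
Proof.
move=> gi gj xF yF exy; have := comp_bdry_f1 gi xF.
by rewrite exy (comp_bdry_f1 gj yF).
Qed.

Lemma bdry_f2_index i j x y : i \in gidx -> j \in gidx ->
  x \in bdry (f2 i) -> y \in bdry (f2 j) -> comp x = comp y -> i = j.
Proof.
move=> gi gj xF yF exy; have := comp_bdry_f2 gi xF.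
by rewrite exy (comp_bdry_f2 gj yF) => -[].
Qed.

Lemma pi_bdry i x : i \in gidx -> x \in bdry (f1 i) -> pi i x \in bdry (f2 i).
Proof. by rewrite mem_gidx => /glue [_ _ _ [_ <-] _] xF; apply: imset_f. Qed.

Lemma pi_bdry_inj i : i \in gidx -> {in bdry (f1 i) &, injective (pi i)}.
Proof. by rewrite mem_gidx => /glue [_ _ _ []]. Qed.

Lemma pi_bdry_onto i y : i \in gidx -> y \in bdry (f2 i) ->
  exists2 x, x \in bdry (f1 i) & y = pi i x.
Proof. by rewrite mem_gidx => /glue [_ _ _ [_ <-] _] /imsetP. Qed.

Lemma not_samev_bdry_f1_f2 i j a b : i \in gidx -> j \in gidx ->
  a \in bdry (f1 i) -> b \in bdry (f2 j) -> ~~ samev a b.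
Proof.
move=> gi gj aF bF; apply/negP => sab.
have eij : i = j.+1 by rewrite -(comp_bdry_f1 gi aF) -(comp_bdry_f2 gj bF) (samev_comp sab).
rewrite {}eij in gi aF; have [x xF sbx] := bdry_face_dart (cyclic_f2 gj) bF.
have [y yF say] := bdry_face_dart (cyclic_f1 gi) aF.
have lt_j2 : j.+2 < n by rewrite -mem_gidx.
move: gj; rewrite mem_gidx => /glue [_ _ /(_ lt_j2 x y xF yF) /negP[]].
rewrite samev_sym in sbx; rewrite samev_sym in sab.
exact: connect_trans sbx (connect_trans sab say).
Qed.

Definition glued_face (F : {set D}) : Prop :=
  exists2 i, i \in gidx & F = f1 i \/ F = f2 i.

Lemma glued_face_cyclic F : glued_face F -> cyclic_face F.
Proof. by case=> i gi [->|->]; [apply: cyclic_f1 | apply: cyclic_f2]. Qed.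

Lemma gboundP a : reflect (exists2 F, glued_face F & a \in bdry F) (gbound a).
Proof.
apply: (iffP hasP) => [[i gi /orP [aF | aF]] | [F [i gi [eF | eF]] aF]].
- by exists (f1 i) => //; exists i; first by []; left.
- by exists (f2 i) => //; exists i; first by []; right.
- by exists i; rewrite // -eF aF.
- by exists i; rewrite // -eF aF orbT.
Qed.

Lemma gbound_bdry F a : glued_face F -> a \in bdry F -> gbound a.
Proof. by move=> gF aF; apply/gboundP; exists F. Qed.

(* Distinct glued faces share no vertex: they lie in different G_i, or are kept
   apart by the gluing set. *)
Lemma gbound_samev_bdry F a b :
  glued_face F -> a \in bdry F -> gbound b -> samev a b -> b \in bdry F.
Proof.
move=> [i gi [-> | ->]] aF /hasP [j gj /orP [bF | bF]] sab.
- by rewrite (bdry_f1_index gi gj aF bF (samev_comp sab)).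
- by case/negP: (not_samev_bdry_f1_f2 gi gj aF bF).
- by case/negP: (not_samev_bdry_f1_f2 gj gi bF aF); rewrite samev_sym.
- by rewrite (bdry_f2_index gi gj aF bF (samev_comp sab)).
Qed.

Lemma gbound_f1 i x : i \in gidx -> x \in bdry (f1 i) -> gbound x.
Proof. by move=> gi xF; apply/hasP; exists i; rewrite ?xF. Qed.

Lemma gbound_f2 i x : i \in gidx -> x \in bdry (f2 i) -> gbound x.
Proof. by move=> gi xF; apply/hasP; exists i; rewrite ?xF ?orbT. Qed.

Lemma glued_corner F x y :
  glued_face F -> corner_of F x y || corner_of F y x -> gcorner x y.
Proof.
by case=> i gi [->|->] /orP [c|c]; apply/hasP; exists i => //; rewrite c ?orbT.
Qed.

Lemma gbound_samev_corner a b : gbound a -> gbound b -> samev a b -> a != b ->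
  gcorner a b /\ rot_adj a b.
Proof.
move=> /gboundP [F gF aF] gb sab nab.
have bF := gbound_samev_bdry gF aF gb sab.
have corner := bdry_corner (glued_face_cyclic gF) aF bF sab nab.
split; first exact: glued_corner corner.
by case/orP: corner => /andP [/eqP-> _]; rewrite /Defs.rot_adj eqxx ?orbT.
Qed.

Definition bmate a : D := odflt a [pick b | [&& b != a, samev a b & gbound b]].

Lemma bmateP a : gbound a ->
  [/\ bmate a != a, samev a (bmate a), gbound (bmate a) &
      forall c, gbound c -> samev a c -> c != a -> c = bmate a].
Proof.
move=> /gboundP [F gF aF]; have cF := glued_face_cyclic gF.
have uniq_mate c d : gbound c -> samev a c -> c != a ->
    gbound d -> samev a d -> d != a -> c = d.
  move=> gc sac nca gd sad nda.
  exact: (bdry_samev_unique cF aF (gbound_samev_bdry gF aF gc sac)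
    (gbound_samev_bdry gF aF gd sad) sac sad nca nda).
rewrite /bmate; case: pickP => [b /and3P [nba sab gb] | none].
  by split=> // c gc sac nca; apply: uniq_mate.
have [b bF /andP [sab nba]] := bdry_mate_exists cF aF.
by have := none b; rewrite nba sab (gbound_bdry gF bF).
Qed.

Lemma bmateK a : gbound a -> bmate (bmate a) = a.
Proof.
move=> ga; have [nma sam gm _] := bmateP ga; have [_ _ _ uniq_mate] := bmateP gm.
by apply: esym; apply: uniq_mate; rewrite // 1?samev_sym // eq_sym.
Qed.

Lemma kept_bdry_f1 i x : i \in gidx -> x \in bdry (f1 i) -> kept x.
Proof.
move=> gi xF; apply/hasPn => j gj; apply/negP => xF2.
by case/negP: (not_samev_bdry_f1_f2 gi gj xF xF2); apply: samev_refl.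
Qed.

Lemma kept_not_gbound x : ~~ gbound x -> kept x.
Proof. by apply: contra => /hasP [j gj xF]; apply/hasP; exists j; rewrite // xF orbT. Qed.

Lemma isrepP x a :
  reflect (a = x \/ exists2 i, i \in gidx & x \in bdry (f1 i) /\ a = pi i x) (isrep x a).
Proof.
apply: (iffP orP) => -[/eqP -> | ]; try by left.
- by case/hasP=> i gi /andP [xF /eqP ->]; right; exists i.
- by case=> i gi [xF ->]; right; apply/hasP; exists i; rewrite // xF eqxx.
Qed.

Lemma kept_rep_exists a : exists2 x, kept x & isrep x a.
Proof.
have [ka | /negPn /hasP [i gi aF]] := boolP (kept a).
  by exists a => //; apply/isrepP; left.
have [x xF ->] := pi_bdry_onto gi aF.
by exists x; [apply: kept_bdry_f1 xF | apply/isrepP; right; exists i].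
Qed.

Lemma kept_rep_unique x y a : kept x -> kept y -> isrep x a -> isrep y a -> x = y.
Proof.
move=> kx ky /isrepP [-> | [i gi [xF ->]]] /isrepP [ea | [j gj [yF ea]]] //.
- by move/hasPn: kx => /(_ j gj); rewrite ea (pi_bdry gj yF).
- by move/hasPn: ky => /(_ i gi); rewrite -ea (pi_bdry gi xF).
- have eij : i = j.
    by apply: bdry_f2_index gi gj (pi_bdry gi xF) (pi_bdry gj yF) _; rewrite ea.
  by rewrite {}eij in gi xF ea *; apply: pi_bdry_inj ea.
Qed.

(* The half-edge of the composite grid that a dart becomes after gluing. *)
Definition gproj a : D := odflt a [pick x | kept x && isrep x a].

Lemma gproj_spec a : kept (gproj a) /\ isrep (gproj a) a.
Proof.
rewrite /gproj; case: pickP => [x /andP [] // | none].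
by have [x kx rx] := kept_rep_exists a; have := none x; rewrite kx rx.
Qed.

Lemma gproj_kept a : kept (gproj a). Proof. by case: (gproj_spec a). Qed.

Lemma isrep_gproj x a : kept x -> isrep x a = (gproj a == x).
Proof.
move=> kx; have [kg rg] := gproj_spec a; apply/idP/eqP => [rx | <-] //.
exact: kept_rep_unique kg kx rg rx.
Qed.

Lemma gprojK x : kept x -> gproj x = x.
Proof. by move=> kx; apply/eqP; rewrite -isrep_gproj //; apply/isrepP; left. Qed.

Lemma gproj_collide a b : gproj a = gproj b -> a != b ->
  [/\ gbound a, gbound b & ~~ samev a b].
Proof.
have [_ ra] := gproj_spec a; have [_ rb] := gproj_spec b; move=> eab.
rewrite -eab in rb; move: (gproj a) ra rb => x.
move=> /isrepP [-> | [i gi [xF ->]]] /isrepP [-> | [j gj [yF ->]]]; rewrite ?eqxx // => nab.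
- split; [exact: gbound_f1 yF | exact: gbound_f2 (pi_bdry gj yF) |].
  exact: not_samev_bdry_f1_f2 yF (pi_bdry gj yF).
- split; [exact: gbound_f2 (pi_bdry gi xF) | exact: gbound_f1 xF |].
  by rewrite samev_sym; apply: not_samev_bdry_f1_f2 xF (pi_bdry gi xF).
- by rewrite (bdry_f1_index gi gj xF yF erefl) eqxx in nab.
Qed.

Lemma gproj_samev_inj a b : samev a b -> gproj a = gproj b -> a = b.
Proof.
move=> sab eab; apply: contraTeq sab => nab.
by case: (gproj_collide eab nab).
Qed.

Section Splitting.
Variable T : D -> D.
Hypothesis smooth_T : smooth_TS_G edge rot n f1 f2 pi T.
Hypothesis even_degree : forall x, ~~ odd (order rot x).

(* [lift_pair a b]: the pair {a, b} of the disjoint union that the pair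
   {gproj a, T (gproj a)} of T comes from; pairs of two glued-boundary
   half-edges are the corners of removed faces and are excluded. *)
Definition lift_pair a b : bool :=
  [&& samev a b, isrep (T (gproj a)) b & ~~ (gbound a && gbound b)].

Lemma lift_pair_gproj a b : lift_pair a b -> gproj b = T (gproj a).
Proof.
case/and3P=> _ rb _; have [kT _ _ _] := smooth_T (gproj_kept a).
by apply/eqP; rewrite -isrep_gproj.
Qed.

Lemma lift_pair_sym a b : lift_pair a b -> lift_pair b a.
Proof.
move=> lab; have [_ TT _ _] := smooth_T (gproj_kept a).
rewrite /lift_pair (lift_pair_gproj lab) TT (gproj_spec a).2 samev_sym.
by case/and3P: lab => -> _; rewrite andbC.
Qed.

Lemma lift_pair_unique a b c : lift_pair a b -> lift_pair a c -> b = c.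
Proof.
move=> lab lac; apply: gproj_samev_inj; last by rewrite (lift_pair_gproj lab) (lift_pair_gproj lac).
case/and3P: lab => sab _ _; case/and3P: lac => sac _ _.
by rewrite samev_sym in sab; apply: connect_trans sab sac.
Qed.

Lemma lift_pair_neq a b : lift_pair a b -> b != a.
Proof.
move=> lab; have [_ _ Tn _] := smooth_T (gproj_kept a).
by apply: contraNneq Tn => eba; rewrite -(lift_pair_gproj lab) eba.
Qed.

Lemma lift_pair_at x : kept x ->
  exists a b, [/\ gproj a = x, gproj b = T x & lift_pair a b].
Proof.
move=> kx; have [kT _ Tn /existsP [a /existsP [b /and4P [ra rb adj ncorner]]]] := smooth_T kx.
have [ga gb] : gproj a = x /\ gproj b = T x by split; apply/eqP; rewrite -isrep_gproj.
exists a, b; split=> //; rewrite /lift_pair (rot_adj_samev adj) ga rb /=.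
apply: contra ncorner => /andP [gba gbb].
have nab : a != b by apply: contraNneq Tn => eab; rewrite -gb -ga eab.
by case: (gbound_samev_corner gba gbb (rot_adj_samev adj) nab).
Qed.

Lemma lift_pair_adj a b : lift_pair a b -> rot_adj a b.
Proof.
move=> lab; have [kT _ _ /existsP [a' /existsP [b' /and4P [ra rb adj _]]]] :=
  smooth_T (gproj_kept a).
have ga : gproj a' = gproj a by apply/eqP; rewrite -isrep_gproj ?gproj_kept.
have gb : gproj b' = gproj b.
  by rewrite (lift_pair_gproj lab); apply/eqP; rewrite -isrep_gproj.
case/and3P: lab => sab _ ngab; have sa'b' := rot_adj_samev adj.
have [ea | na] := eqVneq a' a.
  have sb'b : samev b' b.
    by rewrite ea samev_sym in sa'b'; apply: connect_trans sa'b' sab.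
  by rewrite -(gproj_samev_inj sb'b gb) -ea.
have [_ gba nsa] := gproj_collide ga na.
have [eb | nb] := eqVneq b' b.
  case/negP: nsa; rewrite eb in sa'b'; rewrite samev_sym in sab.
  exact: connect_trans sa'b' sab.
have [_ gbb _] := gproj_collide gb nb.
by rewrite gba gbb in ngab.
Qed.

Lemma lift_pair_exists a : ~~ gbound a -> exists b, lift_pair a b.
Proof.
move=> nga; have ka := kept_not_gbound nga.
have [a' [b [ga _ lab]]] := lift_pair_at ka.
have [<- | na] := eqVneq a' a; first by exists b.
rewrite -(gprojK ka) in ga.
by case: (gproj_collide ga na) => _ gba _; rewrite gba in nga.
Qed.

Definition has_lift a : bool := [exists b, lift_pair a b].

Lemma has_liftP a : reflect (exists b, lift_pair a b) (has_lift a).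
Proof. exact: existsP. Qed.

Lemma gbound_no_lift a : ~~ has_lift a -> gbound a.
Proof. by apply: contraR => /lift_pair_exists [b lab]; apply/has_liftP; exists b. Qed.

Definition desum a : D := if [pick b | lift_pair a b] is Some b then b else bmate a.

Lemma desum_lift a b : lift_pair a b -> desum a = b.
Proof.
move=> lab; rewrite /desum; case: pickP => [c lac | /(_ b)].
  exact: lift_pair_unique lac lab.
by rewrite lab.
Qed.

Lemma desum_no_lift a : ~~ has_lift a -> desum a = bmate a.
Proof.
move=> /has_liftP nla; rewrite /desum; case: pickP => // c lac.
by case: nla; exists c.
Qed.

(* Otherwise desum would be a fixed-point-free involution on the odd set of the
   other half-edges at the vertex of a. *)
Lemma no_lift_bmate a : ~~ has_lift a -> ~~ has_lift (bmate a).
Proof.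
move=> nla; have ga := gbound_no_lift nla; have [_ _ _ uniq_mate] := bmateP ga.
apply/has_liftP => -[c lmc].
pose X := [set b | samev a b] :\ a.
have lift_X z : z \in X -> exists w, lift_pair z w.
  rewrite !inE => /andP [nza saz]; have [gz | ngz] := boolP (gbound z).
    by rewrite (uniq_mate z gz saz nza); exists c.
  exact: lift_pair_exists.
have: ~~ odd #|X|.
  apply: (@even_card_fixfree_involution _ desum) => z zX; have [w lzw] := lift_X z zX.
  rewrite (desum_lift lzw) (desum_lift (lift_pair_sym lzw)) (lift_pair_neq lzw).
  split=> //; move: zX; rewrite !inE => /andP [_ saz]; apply/andP; split.
    by apply: contraNneq nla => ewa; apply/has_liftP; exists z; rewrite -ewa lift_pair_sym.
  by case/and3P: lzw => szw _ _; apply: connect_trans saz szw.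
have card_vertex : #|[set b | samev a b]| = order rot a.
  by apply: eq_card => b; rewrite inE.
have := even_degree a; rewrite -card_vertex (cardsD1 a) inE samev_refl add1n /=.
by rewrite negbK => ->.
Qed.

Lemma desum_smooth : smooth_TS rot desum.
Proof.
move=> x; have [/has_liftP [b lxb] | nlx] := boolP (has_lift x).
  rewrite (desum_lift lxb) (desum_lift (lift_pair_sym lxb)).
  by rewrite (lift_pair_neq lxb) (lift_pair_adj lxb).
have gx := gbound_no_lift nlx; have [nmx sxm gm _] := bmateP gx.
rewrite (desum_no_lift nlx) (desum_no_lift (no_lift_bmate nlx)) bmateK //.
have nxm : x != bmate x by rewrite eq_sym.
by split=> //; case: (gbound_samev_corner gx gm sxm nxm).
Qed.

Lemma desum_bmateE d : gbound d -> (desum d == bmate d) = ~~ has_lift d.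
Proof.
move=> gd; have [_ _ gm _] := bmateP gd.
have [/has_liftP [b ldb] | nld] := boolP (has_lift d); last by rewrite desum_no_lift ?eqxx.
rewrite (desum_lift ldb); apply/negbTE; apply: contraTneq ldb => ->.
by rewrite /lift_pair gd gm !andbF.
Qed.

Lemma ftrans_desum F d : glued_face F -> d \in bdry F ->
  Defs.ftrans edge rot desum F d = (desum d == bmate d).
Proof.
move=> gF dF; have [nmd sdm gm uniq_mate] := bmateP (gbound_bdry gF dF).
have at_d x : x \in bdry F -> samev x d -> x != d -> x = bmate d.
  by move=> xF sxd nxd; apply: uniq_mate; rewrite 1?samev_sym // (gbound_bdry gF xF).
apply/existsP/eqP => [[x /existsP [y /and5P [xF yF nxy sxd /andP [syd /eqP txy]]]] | e].
  have [exd | nxd] := eqVneq x d.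
    by subst x; rewrite txy; apply: at_d; rewrite // eq_sym.
  have ex := at_d x xF sxd nxd; have [eyd | nyd] := eqVneq y d.
    by have [inv _ _] := desum_smooth x; rewrite -ex -eyd -txy inv.
  by rewrite ex (at_d y yF syd nyd) eqxx in nxy.
exists d; apply/existsP; exists (bmate d).
by rewrite dF (gbound_samev_bdry gF dF gm sdm) eq_sym nmd samev_refl samev_sym sdm e eqxx.
Qed.

Lemma has_lift_glued i d : i \in gidx -> d \in bdry (f1 i) ->
  has_lift (pi i d) = ~~ has_lift d.
Proof.
move=> gi dF; have kd := kept_bdry_f1 gi dF; have pdF := pi_bdry gi dF.
have gpd : gproj (pi i d) = d.
  by apply/eqP; rewrite -isrep_gproj //; apply/isrepP; right; exists i.
apply/idP/idP => [/has_liftP [c lpc] | nld].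
  apply/has_liftP => -[b ldb].
  have ebc : gproj b = gproj c.
    by rewrite (lift_pair_gproj ldb) (lift_pair_gproj lpc) gpd gprojK.
  have [ebc' | nbc] := eqVneq b c.
    case/and3P: ldb => sdb _ _; case/and3P: lpc => spb _ _.
    case/negP: (not_samev_bdry_f1_f2 gi gi dF pdF).
    by rewrite samev_sym -ebc' in spb; apply: connect_trans sdb spb.
  have [gb _ _] := gproj_collide ebc nbc.
  by case/and3P: ldb => _ _; rewrite (gbound_f1 gi dF) gb.
have [a [b [ga _ lab]]] := lift_pair_at kd.
have: isrep d a by rewrite isrep_gproj ?ga.
case/isrepP => [ead | [j gj [dFj ea]]].
  by case/has_liftP: nld; exists b; rewrite -ead.
apply/has_liftP; exists b.
by rewrite -(bdry_f1_index gj gi dFj dF erefl) -ea.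
Qed.

Lemma desum_compatible : compatible edge rot n f1 f2 pi desum.
Proof.
move=> i lt_i d dF; have gi : i \in gidx by rewrite mem_gidx.
have pdF := pi_bdry gi dF.
have g1 : glued_face (f1 i) by exists i => //; left.
have g2 : glued_face (f2 i) by exists i => //; right.
rewrite (ftrans_desum g1 dF) (ftrans_desum g2 pdF).
rewrite !desum_bmateE ?(gbound_f1 gi dF) ?(gbound_f2 gi pdF) //.
by rewrite (has_lift_glued gi dF) negbK.
Qed.

Lemma desum_connsum : is_connsum edge n f1 f2 pi T desum.
Proof.
move=> x y kx ky; apply/eqP/existsP => [Txy | [a /existsP [b /and4P [ra rb /eqP dab ngab]]]].
  subst y; have [a [b [ga gb lab]]] := lift_pair_at kx.
  exists a; apply/existsP; exists b.
  rewrite (isrep_gproj _ kx) (isrep_gproj _ ky) ga gb (desum_lift lab) !eqxx /=.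
  by case/and3P: lab.
move: ra rb; rewrite (isrep_gproj _ kx) (isrep_gproj _ ky) => /eqP <- /eqP <-.
have [/has_liftP [c lac] | nla] := boolP (has_lift a).
  by rewrite -dab (desum_lift lac) (lift_pair_gproj lac).
have ga := gbound_no_lift nla; have [_ _ gm _] := bmateP ga.
by rewrite -dab (desum_no_lift nla) ga gm in ngab.
Qed.

Lemma connsum_split : exists t : D -> D,
  [/\ smooth_TS rot t, compatible edge rot n f1 f2 pi t & is_connsum edge n f1 f2 pi T t].
Proof.
by exists desum; split; [apply: desum_smooth | apply: desum_compatible | apply: desum_connsum].
Qed.

End Splitting.
End Gluing.
End Maps.

Theorem mainTheorem10 (D : finType) (edge rot : D -> D) (n : nat)
    (comp : D -> 'I_n) (f1 f2 : nat -> {set D}) (pi : nat -> D -> D)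
    (T : D -> D) :
  torus_grid_family edge rot comp ->
  gluing_set edge rot f1 f2 pi comp ->
  smooth_TS_G edge rot n f1 f2 pi T ->
  exists t : D -> D,
    [/\ smooth_TS rot t,
        compatible edge rot n f1 f2 pi t &
        is_connsum edge n f1 f2 pi T t].
Proof.
move=> [map_er comp_er grids] glue smooth_T.
have [comp_edge comp_rot] := all_and2 comp_er.
have even_degree x : ~~ odd (order rot x).
  have [_ _ _ [k [l [l_even /(_ x)]]]] := grids (comp x).
  by rewrite inE eqxx => /(_ isT) [-> _].
exact: (connsum_split map_er comp_edge comp_rot glue smooth_T even_degree).
Qed.
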